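(* Let $(R,\cdot,\mathfrak e)$ be a symmetric partial $A$-module algebra such that the algebra $A\cdot R$ has nondegenerate product. Then $A\cdot R=\mathfrak e(A)R$ and $A\cdot R=R\,\mathfrak e(A)$.
   Context: $\Bbbk$ is a field; $M(R)$ is the multiplier algebra of an algebra $R$ with nondegenerate product. $A$ is a regular multiplier Hopf algebra with comultiplication $\Delta$, counit $\varepsilon$, bijective antipode $S$ (Sweedler notation with covering conventions). $A\cdot R$ is the linear span of the elements $a\cdot x$; $\mathfrak e(A)R$ and $R\mathfrak e(A)$ are the spans of $\mathfrak e(a)x$, resp. $x\mathfrak e(a)$. A partial $A$-module algebra is a triple $(R,\cdot,\mathfrak e)$, $\cdot:A\otimes R\to R$ and $\mathfrak e:A\to M(R)$ linear, such that for all $a,b\in A$, $x,y\in R$: (i) $a\cdot(x(b\cdot y))=(a_{(1)}\cdot x)(a_{(2)}b\cdot y)$; (ii) $\mathfrak e(a)(b\cdot x)=a_{(1)}\cdot(S(a_{(2)})b\cdot x)$ and $\mathfrak e(A)R\subseteq A\cdot R$; (iii) given $a_1,\dots,a_n\in A$, $x_1,\dots,x_m\in R$ there is $b\in A$ with $a_ib=a_i=ba_i$ and $a_i\cdot x_j=a_i\cdot(b\cdot x_j)$; (iv) $A\cdot x=0$ implies $x=0$. It is symmetric if moreover (v) $a\cdot((b\cdot x)y)=(a_{(1)}b\cdot x)(a_{(2)}\cdot y)$; (vi) $(b\cdot x)\mathfrak e(a)=a_{(2)}\cdot(S^{-1}(a_{(1)})b\cdot x)$; (vii) $R\mathfrak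 e(A)\subseteq A\cdot R$. *)

(* Regular multiplier Hopf algebras and symmetric partial
   module algebras over a field K, with all algebras NON-UNITAL (bilinear
   associative products on K-vector spaces), tensor products given by their
   universal property, and multipliers as pairs (left action, right action). *)
From HB Require Import structures.
From mathcomp Require Import all_boot all_order all_algebra.
Set Implicit Arguments. Unset Strict Implicit. Unset Printing Implicit Defensive.
Import GRing.Theory.
Local Open Scope ring_scope.

Section Generic.
Variable K : fieldType.

Definition bilinear_map (U V W : lmodType K) (f : U -> V -> W) : Prop :=
  (forall v, linear (fun u => f u v)) /\ (forall u, linear (f u)).

Definition trilinear_map (U V W X : lmodType K) (f : U -> V -> W -> X) : Prop :=
  (forall v w, linear (fun u => f u v w)) /\
  (forall u w, linear (fun v => f u v w)) /\
  (forall u v, linear (f u v)).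

Definition is_tensor2 (U V W : lmodType K) (t : U -> V -> W) : Prop :=
  bilinear_map t /\
  (forall (X : lmodType K) (f : U -> V -> X), bilinear_map f ->
     exists g : W -> X, linear g /\ forall u v, g (t u v) = f u v) /\
  (forall (X : lmodType K) (g1 g2 : W -> X), linear g1 -> linear g2 ->
     (forall u v, g1 (t u v) = g2 (t u v)) -> g1 =1 g2).

Definition is_tensor3 (U1 U2 U3 W : lmodType K) (t : U1 -> U2 -> U3 -> W) : Prop :=
  trilinear_map t /\
  (forall (X : lmodType K) (f : U1 -> U2 -> U3 -> X), trilinear_map f ->
     exists g : W -> X, linear g /\ forall u v w, g (t u v w) = f u v w) /\
  (forall (X : lmodType K) (g1 g2 : W -> X), linear g1 -> linear g2 ->
     (forall u v w, g1 (t u v w) = g2 (t u v w)) -> g1 =1 g2).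

Definition is_algebra (V : lmodType K) (m : V -> V -> V) : Prop :=
  bilinear_map m /\ associative m.

Definition nondeg_on (V : lmodType K) (P : V -> Prop) (m : V -> V -> V) : Prop :=
  (forall x, P x -> (forall y, P y -> m x y = 0) -> x = 0) /\
  (forall x, P x -> (forall y, P y -> m y x = 0) -> x = 0).

Definition nondeg (V : lmodType K) (m : V -> V -> V) : Prop :=
  nondeg_on (fun _ => True) m.

(* (L, Rt) is a multiplier of (V, m):  L x = "M x",  Rt x = "x M" *)
Definition is_multiplier (V : lmodType K) (m : V -> V -> V) (L Rt : V -> V) : Prop :=
  (forall x y, L (m x y) = m (L x) y) /\
  (forall x y, Rt (m x y) = m x (Rt y)) /\
  (forall x y, m (Rt x) y = m x (L y)).

Definition span (V : lmodType K) (P : V -> Prop) (v : V) : Prop :=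
  exists s : seq (K * V), (forall p, p \in s -> P p.2) /\
                          v = \sum_(p <- s) p.1 *: p.2.

End Generic.

(* Data of a multiplier Hopf algebra A, with chosen tensor products
   AA = A (x) A, AAA = A (x) A (x) A. *)
Record MHAData (K : fieldType) := {
  hA : lmodType K;
  hAA : lmodType K;
  hAAA : lmodType K;
  mulA : hA -> hA -> hA;
  tens2 : hA -> hA -> hAA;
  mulAA : hAA -> hAA -> hAA;
  tens3 : hA -> hA -> hA -> hAAA;
  DeltaL : hA -> hAA -> hAA;             (* x |-> Delta(a) x *)
  DeltaR : hA -> hAA -> hAA;             (* x |-> x Delta(a) *)
  cov1 : hA -> hA -> hAA;                (* cov1 a b = Delta(a)(1 (x) b) *)
  cov2 : hA -> hA -> hAA;                (* cov2 a b = (a (x) 1)Delta(b) *)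
  cov3 : hA -> hA -> hAA;                (* cov3 a b = Delta(a)(b (x) 1) *)
  cov4 : hA -> hA -> hAA;                (* cov4 a b = (1 (x) a)Delta(b) *)
  counit : hA -> K;
  antipode : hA -> hA
}.

Arguments mulA {K} m : rename. Arguments tens2 {K} m : rename. Arguments mulAA {K} m : rename.
Arguments tens3 {K} m : rename. Arguments DeltaL {K} m : rename. Arguments DeltaR {K} m : rename.
Arguments cov1 {K} m : rename. Arguments cov2 {K} m : rename. Arguments cov3 {K} m : rename.
Arguments cov4 {K} m : rename. Arguments counit {K} m : rename. Arguments antipode {K} m : rename.

Section MHA.
Variable K : fieldType.
Variable H : MHAData K.
Local Notation A := (hA H).
Local Notation AA := (hAA H).
Local Notation AAA := (hAAA H).
Local Notation mA := (mulA H).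
Local Notation mAA := (mulAA H).
Local Notation t2 := (tens2 H).
Local Notation t3 := (tens3 H).
Local Notation eps := (counit H).
Local Notation S := (antipode H).

Definition tensor_map_bijective (f : A -> A -> AA) : Prop :=
  exists T : AA -> AA, linear T /\ bijective T /\ forall a b, T (t2 a b) = f a b.

(* coassociativity:
   (a(x)1(x)1)(Delta(x)id)(Delta(b)(1(x)c)) = (id(x)Delta)((a(x)1)Delta(b))(1(x)1(x)c) *)
Definition coassociative_cov : Prop :=
  forall (tr : AA -> A -> AAA) (tl : A -> AA -> AAA),
    (forall q, linear (fun x => tr x q)) ->
    (forall x y q, tr (t2 x y) q = t3 x y q) ->
    (forall p, linear (tl p)) ->
    (forall p y z, tl p (t2 y z) = t3 p y z) ->
  forall (a b c : A) (Phi Psi : AA -> AAA), linear Phi -> linear Psi ->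
    (forall p q, Phi (t2 p q) = tr (cov2 H a p) q) ->
    (forall p q, Psi (t2 p q) = tl p (cov1 H q c)) ->
    Phi (cov1 H b c) = Psi (cov2 H a b).

Definition is_regular_multiplier_Hopf_algebra : Prop :=
  [/\
   is_tensor2 t2 /\ is_tensor3 t3,
   is_algebra mA /\ nondeg mA,
   bilinear_map mAA /\
     (forall a b c d, mAA (t2 a b) (t2 c d) = t2 (mA a c) (mA b d)),
   [/\ forall a, is_multiplier mAA (DeltaL H a) (DeltaR H a),
       forall x, linear (fun a => DeltaL H a x),
       forall x, linear (fun a => DeltaR H a x),
       forall a b x, DeltaL H (mA a b) x = DeltaL H a (DeltaL H b x) &
       forall a b x, DeltaR H (mA a b) x = DeltaR H b (DeltaR H a x)] &
   [/\
   (* covering: the four products lie in A (x) A (equalities of multipliers,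
      tested on simple tensors; by nondegeneracy one side suffices) *)
   [/\ forall a b c d, DeltaL H a (t2 c (mA b d)) = mAA (cov1 H a b) (t2 c d),
       forall a b c d, DeltaR H b (t2 (mA c a) d) = mAA (t2 c d) (cov2 H a b),
       forall a b c d, DeltaL H a (t2 (mA b c) d) = mAA (cov3 H a b) (t2 c d) &
       forall a b c d, DeltaR H b (t2 c (mA d a)) = mAA (t2 c d) (cov4 H a b)],
   coassociative_cov,
   (* T1, T2 bijective (multiplier Hopf algebra); the analogous maps for
      Delta^cop bijective (regularity) *)
   [/\ tensor_map_bijective (cov1 H), tensor_map_bijective (cov2 H),
       tensor_map_bijective (cov3 H) & tensor_map_bijective (cov4 H)],
   (* counit: (eps(x)id)(Delta(a)(1(x)b)) = ab, (id(x)eps)((a(x)1)Delta(b)) = ab *)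
   [/\ scalar eps,
       forall (g : AA -> A), linear g -> (forall c d, g (t2 c d) = eps c *: d) ->
         forall a b, g (cov1 H a b) = mA a b &
       forall (g : AA -> A), linear g -> (forall c d, g (t2 c d) = eps d *: c) ->
         forall a b, g (cov2 H a b) = mA a b] &
   (* antipode: m(S(x)id)(Delta(a)(1(x)b)) = eps(a) b,
                m(id(x)S)((a(x)1)Delta(b)) = eps(b) a,  S bijective *)
   [/\ linear S,
       forall (g : AA -> A), linear g -> (forall c d, g (t2 c d) = mA (S c) d) ->
         forall a b, g (cov1 H a b) = eps a *: b,
       forall (g : AA -> A), linear g -> (forall c d, g (t2 c d) = mA c (S d)) ->
         forall a b, g (cov2 H a b) = eps b *: a &
       bijective S]]].

(* Partial A-module algebras.  R : nondegenerate algebra, act a x = a . x,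
   e(a) = (eL a, eR a) in M(R), i.e.  eL a x = e(a) x,  eR a x = x e(a). *)
Variables (R : lmodType K) (mR : R -> R -> R) (act : A -> R -> R)
          (eL eR : A -> R -> R).

Definition AdotR : R -> Prop := span (fun z => exists a x, z = act a x).
Definition eA_R : R -> Prop := span (fun z => exists a x, z = eL a x).
Definition R_eA : R -> Prop := span (fun z => exists a x, z = eR a x).

Definition partial_module_algebra : Prop :=
  [/\
   bilinear_map act,
   [/\ forall a, is_multiplier mR (eL a) (eR a),
       forall x, linear (fun a => eL a x) &
       forall x, linear (fun a => eR a x)],
   (* (i)  a.(x(b.y)) = (a_(1).x)(a_(2)b.y) *)
   (forall (x y : R) (F : AA -> R), linear F ->
     (forall c d, F (t2 c d) = mR (act c x) (act d y)) ->
     forall a b, act a (mR x (act b y)) = F (cov1 H a b)) /\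
   (* (ii) e(a)(b.x) = a_(1).(S(a_(2))b.x), using
           a_(1) (x) S(a_(2))b = (id(x)S)((1(x)S^-1(b))Delta(a)),
           and e(A)R \subset A.R *)
   ((forall Sinv : A -> A, cancel S Sinv -> cancel Sinv S ->
     forall (x : R) (G : AA -> R), linear G ->
     (forall c d, G (t2 c d) = act c (act (S d) x)) ->
     forall a b, eL a (act b x) = G (cov4 H (Sinv b) a)) /\
   (forall z, eA_R z -> AdotR z)),
   forall (as_ : seq A) (xs : seq R), exists b : A,
     forall a, a \in as_ ->
       [/\ mA a b = a, mA b a = a &
           forall x, x \in xs -> act a x = act a (act b x)] &
   forall x : R, (forall a, act a x = 0) -> x = 0].

Definition symmetric_partial_module_algebra : Prop :=
  [/\ partial_module_algebra,
   (* (v)  a.((b.x)y) = (a_(1)b.x)(a_(2).y) *)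
   forall (x y : R) (F : AA -> R), linear F ->
     (forall c d, F (t2 c d) = mR (act c x) (act d y)) ->
     forall a b, act a (mR (act b x) y) = F (cov3 H a b),
   (* (vi) (b.x)e(a) = a_(2).(S^-1(a_(1))b.x), using
           S^-1(a_(1))b (x) a_(2) = (S^-1(x)id)((S(b)(x)1)Delta(a)) *)
   forall Sinv : A -> A, cancel S Sinv -> cancel Sinv S ->
     forall (x : R) (G : AA -> R), linear G ->
     (forall c d, G (t2 c d) = act d (act (Sinv c) x)) ->
     forall a b, eR a (act b x) = G (cov2 H (S b) a) &
   forall z, R_eA z -> AdotR z].

End MHA.

Arguments is_regular_multiplier_Hopf_algebra {K} H.
Arguments symmetric_partial_module_algebra {K} H {R} mR act eL eR.
Arguments partial_module_algebra {K} H {R} mR act eL eR.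
Arguments AdotR {K H R} act.
Arguments eA_R {K H R} eL.
Arguments R_eA {K H R} eR.

From Pilot Require Import Defs.

(* A generator [a . x] of [A . R] equals [a . (b . x)] for a local unit [b],
   which is the image of [a (x) S^-1(b)] under the linear map
   [G : c (x) d |-> c . (S(d) . x)].  As [T4 : c (x) d |-> (1 (x) c) Delta(d)]
   is bijective, [a (x) S^-1(b)] is a sum of elements [T4(c (x) d)], and axiom
   (ii) says exactly that [G] sends these to [e(d)(S(c) . x)]; hence
   [A . R] is contained in [e(A) R], and the converse inclusion is an axiom.
   The case of [R e(A)] is the mirror image, with [T2 : c (x) d |-> (c (x) 1)
   Delta(d)] and axiom (vi). *)

From HB Require Import structures.
From mathcomp Require Import all_boot all_order all_algebra.
From Stdlib Require Import ClassicalEpsilon.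
Set Implicit Arguments. Unset Strict Implicit. Unset Printing Implicit Defensive.
Import GRing.Theory.
Local Open Scope ring_scope.

Section Span.
Variables (K : fieldType) (V : lmodType K).
Implicit Types (P : V -> Prop) (v : V).

Lemma span0 P : Defs.span P 0.
Proof. by exists [::]; rewrite big_nil. Qed.

Lemma spanZD P a u v : Defs.span P u -> Defs.span P v -> Defs.span P (a *: u + v).
Proof.
move=> [s [Ps ->]] [s' [Ps' ->]].
exists ([seq (a * p.1, p.2) | p <- s] ++ s'); split.
  move=> p; rewrite mem_cat => /orP[/mapP[q qs ->]|ps'].
    exact: Ps qs.
  exact: Ps' ps'.
rewrite big_cat big_map scaler_sumr; congr (_ + _).
by apply: eq_bigr => p _; rewrite scalerA.
Qed.

Lemma span_mem P v : P v -> Defs.span P v.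
Proof.
move=> Pv; exists [:: (1, v)]; rewrite big_seq1 scale1r.
by split=> // p; rewrite inE => /eqP ->.
Qed.

End Span.

Section SpanLinear.
Variables (K : fieldType) (U V : lmodType K) (f : U -> V).
Hypothesis f_linear : linear f.
HB.instance Definition _ := GRing.isLinear.Build K U V *:%R f f_linear.

Lemma span_linear_image (P : U -> Prop) (Q : V -> Prop) :
  (forall u, P u -> Defs.span Q (f u)) -> forall u, Defs.span P u -> Defs.span Q (f u).
Proof.
move=> PQ u [s [Ps ->]]; rewrite linear_sum.
elim: s Ps => [|p s IHs] Ps; first by rewrite big_nil; exact: span0.
rewrite big_cons linearZ /=; apply: spanZD; first by apply/PQ/Ps; rewrite inE eqxx.
by apply: IHs => q qs; apply: Ps; rewrite inE qs orbT.
Qed.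

End SpanLinear.

Lemma span_sub (K : fieldType) (V : lmodType K) (P Q : V -> Prop) v :
  (forall u, P u -> Defs.span Q u) -> Defs.span P v -> Defs.span Q v.
Proof. by move=> PQ; apply: (@span_linear_image _ _ _ idfun). Qed.

Section TensorSpan.
Variables (K : fieldType) (U V W : lmodType K) (t : U -> V -> W).

Definition simple_tensor (w : W) : Prop := exists u v, w = t u v.

Definition in_tensor_span (w : W) : bool :=
  if excluded_middle_informative (Defs.span simple_tensor w) then true else false.

Lemma in_tensor_spanP w : reflect (Defs.span simple_tensor w) (in_tensor_span w).
Proof. by rewrite /in_tensor_span; case: excluded_middle_informative; constructor. Qed.

Fact in_tensor_span_submod_closed : GRing.submod_closed in_tensor_span.
Proof.
split=> [|a u v /in_tensor_spanP su /in_tensor_spanP sv]; apply/in_tensor_spanP.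
  exact: span0.
exact: spanZD.
Qed.

HB.instance Definition _ :=
  GRing.isSubmodClosed.Build K W in_tensor_span in_tensor_span_submod_closed.

Record tensor_span := TensorSpan { tensor_span_val : W; _ : in_tensor_span tensor_span_val }.
HB.instance Definition _ := [isSub for tensor_span_val].
HB.instance Definition _ := [Choice of tensor_span by <:].
HB.instance Definition _ := [SubChoice_isSubLmodule of tensor_span by <:].

(* The universal property gives a linear corestriction of the identity to the
   span of the simple tensors; by uniqueness, it is a section of the inclusion. *)
Lemma is_tensor2_span : is_tensor2 t -> forall w, Defs.span simple_tensor w.
Proof.
move=> [[t_linl t_linr] [t_univ t_uniq]].
have t_in u v : in_tensor_span (t u v) by apply/in_tensor_spanP/span_mem; exists u, v.
pose t' u v : tensor_span := TensorSpan (t_in u v).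
have t'_bilinear : bilinear_map t'.
  by split=> [v|u] a x y; apply: val_inj; [exact: t_linl | exact: t_linr].
have [g [g_linear g_t']] := t_univ _ t' t'_bilinear.
have valg_linear : linear (fun w => val (g w)) by move=> a x y; rewrite g_linear.
have valgK w : val (g w) = w by apply: (t_uniq _ _ _ valg_linear) => // u v; rewrite g_t'.
by move=> w; rewrite -(valgK w); apply/in_tensor_spanP/(valP (g w)).
Qed.

End TensorSpan.

Lemma span_linear_bijective_tensor (K : fieldType) (U V W X : lmodType K)
    (t f : U -> V -> W) (T : W -> W) (G : W -> X) (Q : X -> Prop) :
  is_tensor2 t -> linear T -> bijective T -> (forall u v, T (t u v) = f u v) ->
  linear G -> (forall u v, Q (G (f u v))) -> forall w, Defs.span Q (G w).
Proof.
move=> t_tensor T_linear [Ti TK TiK] T_t G_linear Q_Gf w.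
rewrite -(TiK w); apply: (@span_linear_image _ _ _ (G \o T) _ (simple_tensor t)).
- by move=> a x y /=; rewrite T_linear G_linear.
- by move=> _ [u [v ->]]; apply: span_mem; rewrite /= T_t.
- exact: is_tensor2_span.
Qed.

Section PartialModuleAlgebra.
Variables (K : fieldType) (H : MHAData K) (R : lmodType K) (act : hA H -> R -> R).
Local Notation A := (hA H).
Local Notation t2 := (tens2 H).
Local Notation S := (antipode H).

Lemma local_unit_act :
  (forall (as_ : seq A) (xs : seq R), exists b : A, forall a, a \in as_ ->
     [/\ Defs.mulA H a b = a, Defs.mulA H b a = a &
         forall x, x \in xs -> act a x = act a (act b x)]) ->
  forall a x, exists b, act a x = act a (act b x).
Proof.
move=> units a x; have [b b_unit] := units [:: a] [:: x].
by exists b; have [_ _ ->] := b_unit a (mem_head _ _); rewrite ?mem_head.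
Qed.

Variable Sinv : A -> A.
Hypotheses (t2_tensor : is_tensor2 t2) (act_bilinear : bilinear_map act).
Hypotheses (S_linear : linear S) (SK : cancel S Sinv) (SinvK : cancel Sinv S).
Hypothesis act_local_unit : forall a x, exists b, act a x = act a (act b x).

HB.instance Definition _ := GRing.isLinear.Build K A A *:%R S S_linear.

Lemma act_antipode_bilinear x : bilinear_map (fun c d => act c (act (S d) x)).
Proof.
have [act_linl act_linr] := act_bilinear.
by split=> [d|c] a u v; rewrite ?act_linl // linearP act_linl act_linr.
Qed.

Lemma act_antipode_inv_bilinear x : bilinear_map (fun c d => act d (act (Sinv c) x)).
Proof.
have [act_linl act_linr] := act_bilinear.
by split=> [d|c] a u v; rewrite ?act_linl // (can2_linear SK SinvK) act_linl act_linr.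
Qed.

Lemma AdotR_sub_eA_R (eL : A -> R -> R) :
  tensor_map_bijective (cov4 H) ->
  (forall x (G : hAA H -> R), linear G ->
     (forall c d, G (t2 c d) = act c (act (S d) x)) ->
     forall a b, eL a (act b x) = G (cov4 H (Sinv b) a)) ->
  forall z, AdotR act z -> eA_R eL z.
Proof.
move=> [T [T_linear [T_bij T_t]]] eL_act z; apply: span_sub => _ [a [x ->]].
have [b ->] := act_local_unit a x.
have [G [G_linear G_t]] := t2_tensor.2.1 _ _ (act_antipode_bilinear x).
rewrite -[b]SinvK -G_t.
apply: (span_linear_bijective_tensor t2_tensor T_linear T_bij T_t G_linear) => c d.
by exists d, (act (S c) x); rewrite (eL_act x G G_linear G_t) SK.
Qed.

Lemma AdotR_sub_R_eA (eR : A -> R -> R) :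
  tensor_map_bijective (cov2 H) ->
  (forall x (G : hAA H -> R), linear G ->
     (forall c d, G (t2 c d) = act d (act (Sinv c) x)) ->
     forall a b, eR a (act b x) = G (cov2 H (S b) a)) ->
  forall z, AdotR act z -> R_eA eR z.
Proof.
move=> [T [T_linear [T_bij T_t]]] eR_act z; apply: span_sub => _ [a [x ->]].
have [b ->] := act_local_unit a x.
have [G [G_linear G_t]] := t2_tensor.2.1 _ _ (act_antipode_inv_bilinear x).
rewrite -[b]SK -G_t.
apply: (span_linear_bijective_tensor t2_tensor T_linear T_bij T_t G_linear) => c d.
by exists d, (act (Sinv c) x); rewrite (eR_act x G G_linear G_t) SinvK.
Qed.

End PartialModuleAlgebra.

Theorem mainTheorem12 (K : fieldType) (H : MHAData K)
  (R : lmodType K) (mR : R -> R -> R) (act : hA H -> R -> R)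
  (eL eR : hA H -> R -> R) :
  is_regular_multiplier_Hopf_algebra H ->
  is_algebra mR -> nondeg mR ->
  symmetric_partial_module_algebra H mR act eL eR ->
  nondeg_on (AdotR act) mR ->
  (forall z, AdotR act z <-> eA_R eL z) /\
  (forall z, AdotR act z <-> R_eA eR z).
Proof.
move=> [[t2_tensor _] _ _ _ [_ _ [_ cov2_bij _ cov4_bij] _ [S_linear _ _ [Sinv SK SinvK]]]].
move=> _ _ [[act_bilinear _ [_ [eL_act eA_R_sub]] local_units _] _ eR_act R_eA_sub] _.
have act_local_unit := local_unit_act local_units.
split=> z; split; [| exact: eA_R_sub | | exact: R_eA_sub].
- exact: (AdotR_sub_eA_R t2_tensor act_bilinear S_linear SK SinvK act_local_unit
            cov4_bij (eL_act Sinv SK SinvK)).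
- exact: (AdotR_sub_R_eA t2_tensor act_bilinear S_linear SK SinvK act_local_unit
            cov2_bij (eR_act Sinv SK SinvK)).
Qed.
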